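(* Let $k$ and $n$ be positive integers with $1 \leqslant k<n$. Suppose that there exists a prime $p>\max\{(k+2)(k+3)/2,\ 3k+8\}$ such that \[ \frac{n}{k+3}<p \leqslant \frac{n}{k+1}. \] Then for every $i\in\{1,2,\ldots,n\}$, the number \[ S(n,i,k)=\sum_{\substack{1 \leqslant i_1<i_2<\cdots<i_k \leqslant n,\\ i_j \neq i \text{ for } j=1,2,\ldots,k}} \frac{1}{i_1 i_2 \cdots i_k} \] is not an integer.
   Context: For integers $n,i,k$ with $1\leqslant k<n$ and $1\leqslant i\leqslant n$, $S(n,i,k)$ denotes the $k$-th elementary symmetric function of the $n-1$ numbers $\{1,1/2,\ldots,1/n\}\setminus\{1/i\}$. *)

From mathcomp Require Import all_boot all_order all_algebra.
Set Implicit Arguments. Unset Strict Implicit. Unset Printing Implicit Defensive.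
Import Order.TTheory GRing.Theory Num.Theory.
Local Open Scope ring_scope.

(* Indices j : 'I_n represent the integer j+1. The sum runs over all k-element
   subsets A of {1..n} not containing i, of 1 / prod_{a in A} a. *)
Definition Snik (n i k : nat) : rat :=
  \sum_(A : {set 'I_n} | (#|A| == k)%N && [forall j in A, (j.+1 != i)%N])
     (\prod_(j in A) (j.+1)%:R)^-1.

From HB Require Import structures.
From mathcomp Require Import all_boot all_order all_algebra.
From mathcomp Require Import zify ring.
Set Implicit Arguments. Unset Strict Implicit. Unset Printing Implicit Defensive.
Import Order.TTheory GRing.Theory Num.Theory.

(* Let m = n / p (rounded down), so k + 1 <= m <= k + 2 < p and the multiples
   of p in {1, ..., n} are p, 2p, ..., mp.  Multiply S(n,i,k) by p^(k-1).  A
   term 1/(j_1 ... j_k) in which some j_l is not a multiple of p becomes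
   p-integral, since each multiple qp has q < p, so the denominator contains p
   at most k - 1 times.  The terms built from the set Q of multiples of p other
   than i add up to e_d(q : qp in Q) / (p * prod_(qp in Q) q) with
   d = |Q| - k in {0, 1, 2}.  Its numerator is 1, a sum of at most
   1 + ... + m < p, or e_2(1, ..., k + 2) = (k+1)(k+2)(k+3)(3k+8)/24, never a
   multiple of p.  So p^(k-1) S(n,i,k) is not p-integral, and S(n,i,k) is not
   an integer. *)

Lemma coprime_prodr (I : Type) (r : seq I) (P : pred I) (F : I -> nat) m :
  (forall i, P i -> coprime m (F i)) -> coprime m (\prod_(i <- r | P i) F i).
Proof.
move=> mF; apply: (big_ind (coprime m)) => // [|x y mx my].
  exact: coprimen1.
by rewrite coprimeMr mx.
Qed.

Lemma sum_succ_mul2 m : (\sum_(q < m) q.+1) * 2 = m * m.+1.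
Proof. by elim: m => [|m IH]; rewrite ?big_ord0 // big_ord_recr /= mulnDl IH; lia. Qed.

Lemma sum_succ_sqr_mul6 m :
  (\sum_(q < m) q.+1 ^ 2) * 6 = m * m.+1 * (2 * m + 1).
Proof. by elim: m => [|m IH]; rewrite ?big_ord0 // big_ord_recr /= mulnDl IH; lia. Qed.

Section Multiples.
Variables n p : nat.

Definition multiples : {set 'I_n} := [set j : 'I_n | p %| j.+1].

Lemma big_multiples (R : Type) (idx : R) (op : Monoid.law idx) (g : nat -> R) :
  0 < p ->
  \big[op/idx]_(j in multiples) g (j.+1 %/ p) = \big[op/idx]_(q < n %/ p) g q.+1.
Proof.
move=> p_gt0; rewrite (eq_bigl (fun j : 'I_n => p %| j.+1)) => [|j]; last first.
  by rewrite inE.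
rewrite -(big_mkord (fun j => p %| j.+1) (fun j => g (j.+1 %/ p))).
rewrite -(big_mkord xpredT (fun q => g q.+1)).
elim: n => [|N IH]; first by rewrite div0n big_geq // big_geq.
rewrite big_mkcond big_nat_recr // -big_mkcond /= IH divnS //.
case: (p %| N.+1) => /=; last by rewrite Monoid.mulm1.
(* Not [//]: [done] would try to evaluate [0 <= N %/ p] and hang. *)
by rewrite add1n (big_nat_recr (N %/ p)) ?leq0n.
Qed.

Lemma card_multiples : 0 < p -> #|multiples| = n %/ p.
Proof.
move=> p_gt0; rewrite -sum1_card (big_multiples _ (fun=> 1)) //.
by rewrite sum1_card card_ord.
Qed.

Lemma quot_multiples j : j \in multiples -> 0 < j.+1 %/ p <= n %/ p.
Proof.
rewrite inE => pj; rewrite leq_div2r ?andbT; last exact: ltn_ord.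
by rewrite (divn_gt0 _ (dvdn_gt0 (ltn0Sn j) pj)) (dvdn_leq (ltn0Sn j) pj).
Qed.

Lemma prod_succ_multiplesE (A : {set 'I_n}) :
  \prod_(j in A) j.+1 = p ^ #|A :&: multiples| *
    (\prod_(j in A :&: multiples) (j.+1 %/ p) * \prod_(j in A :\: multiples) j.+1).
Proof.
rewrite (big_setID multiples) /= mulnA; congr (_ * _).
rewrite -prod_nat_const -big_split /=; apply: eq_bigr => j /setIP [_].
by rewrite inE mulnC => /divnK.
Qed.

Hypotheses (p_prime : prime p) (quot_lt_p : n %/ p < p).

Lemma coprime_quot_multiples j : j \in multiples -> coprime p (j.+1 %/ p).
Proof.
move=> /quot_multiples /andP [q_gt0 q_le]; rewrite prime_coprime // gtnNdvd //.
exact: leq_ltn_trans q_le quot_lt_p.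
Qed.

Lemma coprime_cofactor_multiples (A : {set 'I_n}) : coprime p
  (\prod_(j in A :&: multiples) (j.+1 %/ p) * \prod_(j in A :\: multiples) j.+1).
Proof.
rewrite coprimeMr; apply/andP; split; apply: coprime_prodr => j.
  by move=> /setIP [_ /coprime_quot_multiples].
by move=> /setDP [_]; rewrite inE prime_coprime.
Qed.

End Multiples.

Lemma card_setI_avoiding n i (M : {set 'I_n}) :
  #|M| <= #|M :&: [set j : 'I_n | j.+1 != i]|.+1.
Proof.
rewrite -(cardsID [set j : 'I_n | j.+1 != i] M) -addn1 leq_add2l.
apply/card_le1_eqP => x y; rewrite !inE !negbK => /andP [/eqP xi _] /andP [/eqP yi _].
by apply/val_inj/succn_inj; rewrite xi yi.
Qed.

Section ElementarySymmetric.
Local Open Scope ring_scope.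
Variables (R : comPzSemiRingType) (T : finType).
Implicit Types (M : {set T}) (f : T -> R).

Definition elem_sym M d f : R :=
  \sum_(B : {set T} | (B \subset M) && (#|B| == d)) \prod_(j in B) f j.

Lemma elem_sym0 M f : elem_sym M 0 f = 1.
Proof.
rewrite /elem_sym (big_pred1 set0) ?big_set0 // => B /=.
by rewrite cards_eq0 andbC; case: eqP => // ->; rewrite sub0set.
Qed.

Lemma elem_sym1 M f : elem_sym M 1 f = \sum_(j in M) f j.
Proof.
under [RHS]eq_bigr => j _ do rewrite -[f j](@big_set1 R 1 *%R T j f).
rewrite /elem_sym -(big_imset (fun B : {set T} => \prod_(j in B) f j) (in2W set1_inj)).
apply: eq_bigl => B; apply/andP/imsetP => [[BM /cards1P [x Bx]]|[x xM ->]].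
  by exists x; rewrite // -sub1set -Bx.
by rewrite sub1set xM cards1.
Qed.

Lemma elem_sym2 M f :
  elem_sym M 2 f *+ 2 + \sum_(j in M) f j ^+ 2 = (\sum_(j in M) f j) ^+ 2.
Proof.
have -> : (\sum_(j in M) f j) ^+ 2 =
    \sum_(x in M) f x ^+ 2 + \sum_(x in M) \sum_(y in M | y != x) f x * f y.
  rewrite expr2 mulr_suml -big_split /=; apply: eq_bigr => x xM.
  by rewrite mulr_sumr (bigD1 x) //= expr2.
rewrite addrC; congr (_ + _).
rewrite pair_big_dep /= (partition_big (fun u : T * T => [set u.1; u.2])
   (fun B : {set T} => (B \subset M) && (#|B| == 2))) /=; last first.
  move=> [x y] /= /andP [xM /andP [yM yx]].
  rewrite cards2 [x == y]eq_sym yx andbT; apply/subsetP => z.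
  by rewrite in_set2 => /orP [] /eqP ->.
rewrite /elem_sym -sumrMnl; apply: eq_bigr => B /andP [BM /cards2P [a [b [ab EB]]]].
rewrite EB in BM *.
have aM : a \in M by apply: (subsetP BM); apply: set21.
have bM : b \in M by apply: (subsetP BM); apply: set22.
rewrite (bigD1 (a, b)) /=; last by rewrite aM bM eq_sym ab eqxx.
rewrite (bigD1 (b, a)) /=; last first.
  by rewrite bM aM ab setUC eqxx xpair_eqE negb_and ab orbT.
rewrite big_setU1 ?inE //= big_set1 mulr2n [f b * _]mulrC.
rewrite [X in _ = _ + (_ + X)]big_pred0 ?addr0 // => -[x y] /=.
apply/negP => /andP [/andP [/andP [/andP [_ /andP [_ yx]] /eqP E] n1] n2].
have [xab yab] : x \in [set a; b] /\ y \in [set a; b] by rewrite -E !inE !eqxx orbT.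
move: xab yab n1 n2 yx; rewrite !inE !xpair_eqE.
by do 2 case/orP=> /eqP->; rewrite ?eqxx.
Qed.

End ElementarySymmetric.

Section NotDivisible.
Variables n p k : nat.
Hypotheses (p_prime : prime p) (bin_lt : (k + 2) * (k + 3) < 2 * p)
  (lin_lt : 3 * k + 8 < p) (quot_bounds : k.+1 <= n %/ p <= k.+2).

Lemma coprime_elem_sym_multiples (M : {set 'I_n}) :
  M \subset multiples n p -> (n %/ p).-1 <= #|M| -> k <= #|M| ->
  coprime p (elem_sym M (#|M| - k) (fun j => j.+1 %/ p)).
Proof.
move=> MM M_ge k_le; have m_bounds := quot_bounds.
set m := n %/ p in m_bounds M_ge *; set q := fun j : 'I_n => j.+1 %/ p.
have p_gt0 := prime_gt0 p_prime.
have M_le : #|M| <= m by rewrite /m -card_multiples // subset_leq_card.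
have sum_q : (\sum_(j in multiples n p) q j) * 2 = m * m.+1.
  by rewrite (big_multiples _ _ id) // sum_succ_mul2.
have [d0|[d1|[d2 [M_m m_k]]]] : #|M| - k = 0 \/ #|M| - k = 1
   \/ #|M| - k = 2 /\ #|M| = m /\ m = k + 2 by lia.
- by rewrite d0 elem_sym0 coprimen1.
- rewrite d1 elem_sym1; change (coprime p (\sum_(j in M) q j)).
  rewrite prime_coprime // gtnNdvd //.
    have [x xM] : {x | x \in M} by apply/sigW/set0Pn; rewrite -card_gt0; lia.
    rewrite (bigD1 x) //=; apply: leq_trans (leq_addr _ _).
    by have /andP [] := quot_multiples (subsetP MM x xM).
  have : \sum_(j in M) q j <= \sum_(j in multiples n p) q j.
    by rewrite [X in _ <= X](big_setID M) /= (setIidPr MM) leq_addr.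
  have : m * m.+1 <= (k + 2) * (k + 3) by apply: leq_mul; lia.
  by move: sum_q bin_lt; clear; nia.
have M_all : M = multiples n p.
  by apply/eqP; rewrite eqEcard MM card_multiples // M_m /= leqnn.
have sum_q2 : (\sum_(j in multiples n p) q j ^ 2) * 6 = m * m.+1 * (2 * m + 1).
  by rewrite (big_multiples _ _ (fun x => x ^ 2)) // sum_succ_sqr_mul6.
rewrite d2; set E := elem_sym M 2 q.
have E2 : E + E + \sum_(j in M) q j ^ 2 = (\sum_(j in M) q j) ^ 2 := elem_sym2 M q.
have E24 : E * 24 = (k + 1) * (k + 2) * (k + 3) * (3 * k + 8).
  move: E2 sum_q sum_q2; rewrite M_all m_k.
  by move: (\sum_(j in _) q j) (\sum_(j in _) q j ^ 2) => a b; clear; nia.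
have : coprime p (E * 24).
  by rewrite E24 !coprimeMr !prime_coprime // !gtnNdvd //; lia.
by rewrite coprimeMr => /andP [].
Qed.

End NotDivisible.

Local Open Scope ring_scope.

Lemma natr_elem_sym (R : comPzSemiRingType) (T : finType) (M : {set T}) d
    (f : T -> nat) :
  (elem_sym M d f)%:R = elem_sym M d (fun j => (f j)%:R : R).
Proof. by rewrite natr_sum; apply: eq_bigr => B _; rewrite natr_prod. Qed.

Lemma sum_inv_prod_subsets (F : fieldType) (T : finType) (M : {set T})
    (f : T -> F) k :
  {in M, forall j, f j != 0} -> (k <= #|M|)%N ->
  \sum_(A : {set T} | (A \subset M) && (#|A| == k)) (\prod_(j in A) f j)^-1
    = elem_sym M (#|M| - k)%N f / \prod_(j in M) f j.
Proof.
move=> f_neq0 k_le; rewrite /elem_sym mulr_suml.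
have compK (B : {set T}) : B \subset M -> M :\: (M :\: B) = B.
  by move=> BM; rewrite setDDr setDv set0U (setIidPr BM).
rewrite (reindex_onto (fun B => M :\: B) (fun B => M :\: B)) /=; last first.
  by move=> A /andP [AM _]; rewrite compK.
apply: eq_big => [B|B /andP [_ /eqP compB]].
  rewrite subsetDl; case BM: (B \subset M); rewrite /= ?andbF.
    rewrite compK // eqxx andbT cardsD (setIidPr BM).
    by apply/eqP/eqP; move: (subset_leq_card BM) k_le; lia.
  apply/negbTE/andP => -[_ /eqP E].
  by rewrite -E setDDr setDv set0U subsetIl in BM.
have BM : B \subset M by rewrite -compB subsetDl.
have prod_neq0 : \prod_(j in B) f j != 0.
  by apply/prodf_neq0 => j /(subsetP BM)/f_neq0.
by rewrite [X in _ / X](big_setID B) /= (setIidPr BM) invfM mulrA divff ?mul1r.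
Qed.

Section PIntegral.
Variable p : nat.

Definition pintegral : {pred rat} := [pred x | coprime p `|denq x|].

Lemma coprime_denq_frac (a b : int) :
  coprime p `|b| -> coprime p `|denq (a%:~R / b%:~R)|.
Proof.
case: divqP => [_ _|c x _]; first by rewrite (denq_int 0) coprimen1.
by rewrite abszM coprimeMr => /andP [].
Qed.

Lemma pintegral_subring_closed : subring_closed pintegral.
Proof.
have den_neq0 x : (denq x)%:~R != 0 :> rat by rewrite intr_eq0 denq_neq0.
have fracE x : x = (numq x)%:~R / (denq x)%:~R by rewrite divq_num_den.
split=> [|x y|x y]; rewrite !inE ?(denq_int 1) ?coprimen1 // => px py.
  have -> : x - y = (numq x * denq y - numq y * denq x)%:~R / (denq x * denq y)%:~R.
    rewrite {1}[x]fracE {1}[y]fracE intrB !intrM; field.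
    by rewrite !den_neq0.
  by apply: coprime_denq_frac; rewrite abszM coprimeMr px py.
have -> : x * y = (numq x * numq y)%:~R / (denq x * denq y)%:~R.
  by rewrite {1}[x]fracE {1}[y]fracE !intrM mulf_div.
by apply: coprime_denq_frac; rewrite abszM coprimeMr px py.
Qed.

HB.instance Definition _ := GRing.isSubringClosed.Build rat pintegral
  pintegral_subring_closed.

Lemma pintegral_frac (a : int) (b : nat) : coprime p b -> a%:~R / b%:R \in pintegral.
Proof. by move=> pb; rewrite inE -[b%:R]/((b : int)%:~R) coprime_denq_frac. Qed.

Lemma frac_notin_pintegral (a b : nat) : prime p -> coprime p a -> (0 < b)%N ->
  a%:R / (p * b)%:R \notin pintegral.
Proof.
move=> p_prime; rewrite prime_coprime // => pNa b_gt0.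
set x := _ / _; rewrite inE prime_coprime //.
have : numq x * (p * b)%:Z = a%:Z * denq x.
  apply: (@intr_inj rat); rewrite !intrM numqE mulrAC; congr (_ * _); apply: divfK.
  by rewrite pnatr_eq0 muln_eq0 negb_or -!lt0n prime_gt0.
move/(congr1 absz); rewrite !abszM /= => E.
have : (p %| a * `|denq x|)%N by rewrite -E mulnCA dvdn_mulr.
by rewrite Euclid_dvdM // (negbTE pNa) negbK.
Qed.

End PIntegral.

Section ScaledTerms.
Variables n p k : nat.
Hypotheses (p_prime : prime p) (quot_lt_p : (n %/ p < p)%N).

Let p_neq0 : p%:R != 0 :> rat.
Proof. by rewrite pnatr_eq0 -lt0n prime_gt0. Qed.

Lemma scaled_inv_prod_pintegral (A : {set 'I_n}) :
  #|A| = k -> ~~ (A \subset multiples n p) ->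
  p%:R ^+ k.-1 / \prod_(j in A) (j.+1)%:R \in pintegral p.
Proof.
move=> cardA notAM; set t := #|A :&: multiples n p|.
have t_lt_k : (t < k)%N.
  rewrite -cardA; apply: proper_card; rewrite properEneq subsetIl andbT.
  by apply: contraNneq notAM => <-; apply: subsetIr.
rewrite -natr_prod (prod_succ_multiplesE p) natrM natrX.
rewrite -(subnK (_ : t <= k.-1)%N) ?exprD; last by lia.
rewrite invfM mulrA mulfK ?expf_neq0 // -natrX.
apply: (pintegral_frac (p ^ (k.-1 - t))%N).
exact: coprime_cofactor_multiples.
Qed.

Lemma sum_scaled_inv_prod_multiples (M : {set 'I_n}) :
  M \subset multiples n p -> (0 < k <= #|M|)%N ->
  \sum_(A : {set 'I_n} | (A \subset M) && (#|A| == k))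
      p%:R ^+ k.-1 / \prod_(j in A) (j.+1)%:R
    = (elem_sym M (#|M| - k)%N (fun j => (j.+1 %/ p)%N))%:R
        / (p * \prod_(j in M) (j.+1 %/ p)%N)%N%:R :> rat.
Proof.
move=> MM /andP [k_gt0 k_le].
have q_neq0 : {in M, forall j : 'I_n, (j.+1 %/ p)%N%:R != 0 :> rat}.
  by move=> j /(subsetP MM) /quot_multiples /andP [q_gt0 _]; rewrite pnatr_eq0 -lt0n.
rewrite natrM natr_prod natr_elem_sym invfM mulrCA -(sum_inv_prod_subsets q_neq0 k_le).
rewrite mulr_sumr; apply: eq_bigr => A /andP [AM /eqP cardA].
have AMp : A \subset multiples n p by apply: subset_trans AM MM.
rewrite -natr_prod (prod_succ_multiplesE p) (setIidPl AMp).
rewrite (_ : A :\: _ = set0) ?big_set0 ?muln1; last by apply/eqP; rewrite setD_eq0.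
rewrite natrM natrX natr_prod cardA -(prednK k_gt0) exprS /= invfM mulrA.
by congr (_ / _); rewrite invfM mulrCA divff ?mulr1 // expf_neq0.
Qed.

Lemma scaled_sum_inv_prod_pintegral (U : {set 'I_n}) :
  (0 < k <= #|multiples n p :&: U|)%N ->
  p%:R ^+ k.-1 * \sum_(A : {set 'I_n} | (A \subset U) && (#|A| == k))
      (\prod_(j in A) (j.+1)%:R)^-1
    - (elem_sym (multiples n p :&: U) (#|multiples n p :&: U| - k)%N
         (fun j => (j.+1 %/ p)%N))%:R
      / (p * \prod_(j in multiples n p :&: U) (j.+1 %/ p)%N)%N%:R
    \in pintegral p.
Proof.
move=> k_le; rewrite mulr_sumr (bigID (fun A : {set 'I_n} => A \subset multiples n p)) /=.
rewrite (eq_bigl (fun A : {set 'I_n} => (A \subset multiples n p :&: U) && (#|A| == k))).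
  rewrite -(sum_scaled_inv_prod_multiples (subsetIl _ _) k_le) addrAC subrr add0r.
  apply: rpred_sum => A /andP [/andP [_ /eqP cardA] notAM].
  exact: scaled_inv_prod_pintegral.
by move=> A; rewrite subsetI; case: (A \subset U); rewrite ?andbT ?andbF // andbC.
Qed.

End ScaledTerms.

Lemma Snik_subsetE n i k : Snik n i k =
  \sum_(A : {set 'I_n} | (A \subset [set j : 'I_n | j.+1 != i]) && (#|A| == k))
    (\prod_(j in A) (j.+1)%:R)^-1.
Proof.
apply: eq_bigl => A; rewrite andbC; congr (_ && _).
by apply/forall_inP/subsetP => jA j /jA; rewrite inE.
Qed.

Theorem lemma2p2 (n k : nat) :
  (1 <= k)%N -> (k < n)%N ->
  (exists p : nat,
      prime p /\
      ((k + 2) * (k + 3) < 2 * p)%N /\ (3 * k + 8 < p)%N /\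
      (n < p * (k + 3))%N /\ (p * (k + 1) <= n)%N) ->
  forall i : nat, (1 <= i <= n)%N ->
    ~ (exists m : int, Snik n i k = m%:~R).
Proof.
move=> k_gt0 _ [p [p_prime [bin_lt [lin_lt [n_lt n_ge]]]]] i _ [z Snik_z].
have p_gt0 := prime_gt0 p_prime.
have quot_bounds : (k.+1 <= n %/ p <= k.+2)%N.
  by apply/andP; split; [rewrite leq_divRL | rewrite -ltnS ltn_divLR] => //; lia.
have quot_lt_p : (n %/ p < p)%N by lia.
set Ms := multiples n p :&: [set j : 'I_n | j.+1 != i].
have Ms_ge : ((n %/ p).-1 <= #|Ms|)%N.
  by have := card_setI_avoiding i (multiples n p); rewrite -/Ms card_multiples //; lia.
have k_le : (0 < k <= #|Ms|)%N by lia.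
have prod_gt0 : (0 < \prod_(j in Ms) (j.+1 %/ p))%N.
  by apply: prodn_cond_gt0 => j /setIP [/quot_multiples /andP []].
have := scaled_sum_inv_prod_pintegral p_prime quot_lt_p k_le.
rewrite -Snik_subsetE Snik_z rpredBl; last by rewrite rpredM ?rpredX ?rpred_nat ?rpred_int.
apply/negP/frac_notin_pintegral => //.
apply: (coprime_elem_sym_multiples p_prime bin_lt lin_lt quot_bounds (subsetIl _ _) Ms_ge).
by case/andP: k_le.
Qed.
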